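(* Let $X$ be a random vector in $\mathbb{R}^n$. Then $\mathbb{P}\big(X\in\mathcal{C}_n(X)\big)=1$.
   Context: For a random vector $X$ in $\mathbb{R}^n$ and an integer $m\ge0$, the $m$-dimensional mould $\mathcal{C}_m(X)$ is the set of all $x\in\mathbb{R}^n$ such that $\liminf_{\epsilon\to0^+}\mathbb{P}(\|X-x\|_2<\epsilon)/\epsilon^m>0$. (It is a Borel subset of $\mathbb{R}^n$.) *)

From HB Require Import structures.
From mathcomp Require Import all_boot all_order all_algebra.
From mathcomp Require Import all_classical all_reals all_analysis.
Set Implicit Arguments. Unset Strict Implicit. Unset Printing Implicit Defensive.
Import Order.TTheory GRing.Theory Num.Theory.
Import numFieldTopology.Exports numFieldNormedType.Exports.
Local Open Scope classical_set_scope.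
Local Open Scope ring_scope.

Definition euclid_norm (R : realType) (n : nat) (v : 'rV[R]_n) : R :=
  Num.sqrt (\sum_(i < n) (v ord0 i) ^+ 2).

(* A random vector in R^n on (T, P): every coordinate is measurable
   (equivalently, X is Borel measurable into R^n). *)
Definition random_vector (d : measure_display) (T : measurableType d)
  (R : realType) (n : nat) (X : T -> 'rV[R]_n) : Prop :=
  forall i : 'I_n, measurable_fun setT (fun t => X t ord0 i).

Definition mould (d : measure_display) (T : measurableType d) (R : realType)
  (P : probability T R) (n : nat) (X : T -> 'rV[R]_n) (m : nat)
  : set 'rV[R]_n :=
  [set x | (0 < limf_einf
     (fun eps : R => (P [set t | (euclid_norm (X t - x) < eps)%R]
                      * ((eps ^+ m)^-1)%:E)%E)
     (0 : R)^'+)%E].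

From HB Require Import structures.
From mathcomp Require Import all_boot all_order all_algebra.
From mathcomp Require Import all_classical all_reals all_analysis.
From mathcomp Require Import measurable_realfun zify lra.
Import Order.TTheory GRing.Theory Num.Theory.
Import numFieldTopology.Exports numFieldNormedType.Exports.
Local Open Scope classical_set_scope.
Local Open Scope ring_scope.
Set Implicit Arguments. Unset Strict Implicit. Unset Printing Implicit Defensive.

(** Since [r |-> P(|X - x| < r)] is nondecreasing, [x] lies in the mould
    exactly when, for some [N], all but finitely many dyadic radii [2^-k] carry
    mass at least [2^-kn / (N+1)]; call the other radii sparse at [x].  The
    dyadic cube of side [2^-(k+n)] containing [x] lies in the ball of radius
    [2^-k], so a sparse radius makes that cube light: its mass is below
    [delta] times its volume, with [delta = 2^(n^2) / (N+1)].  Stopping at the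
    largest light cube, and splitting every heavy cube into its [2^n]
    children of total volume equal to its own, shows that [X] falls into a
    light cube inside [[-M, M)^n] with probability at most [delta (2M)^n].
    Letting [N] go to infinity and exhausting [R^n] by such boxes, almost
    surely some [N] leaves only finitely many sparse radii. *)

Section dyadic_scales.
Variable R : realType.

Lemma dyadic_gt0 k : 0 < 2 ^- k :> R.
Proof. by rewrite invr_gt0 exprn_gt0. Qed.

Lemma dyadic_le j k : (j <= k)%N -> 2 ^- k <= 2 ^- j :> R.
Proof. by move=> jk; rewrite lef_pV2 ?posrE ?exprn_gt0 // ler_weXn2l ?ler1n. Qed.

Lemma dyadic_powS m k : (2 ^- k.+1) ^+ m = (2 ^- k) ^+ m / 2 ^+ m :> R.
Proof. by rewrite exprSr invfM exprMn !exprVn. Qed.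

Lemma dyadic_bound_lt (e : R) : 0 < e -> 2 ^- Num.bound e^-1 < e.
Proof.
move=> e0; rewrite -[ltRHS]invrK ltf_pV2 ?posrE ?invr_gt0 ?exprn_gt0 //.
exact: upper_nthrootP.
Qed.

Lemma dyadic_bracket (y : R) k0 : 0 < y -> y < 2 ^- k0 ->
  exists2 k, (k0 <= k)%N & 2 ^- k.+1 <= y < 2 ^- k.
Proof.
move=> y0 yk0.
have : 2 ^- (k0 + Num.bound y^-1) <= y.
  exact/ltW/(le_lt_trans (dyadic_le (leq_addl _ _)) (dyadic_bound_lt y0)).
elim: (Num.bound y^-1) => [|j IH] yj; first by rewrite addn0 leNgt yk0 in yj.
have [ylt|yge] := ltP y (2 ^- (k0 + j)); last exact: IH.
by exists (k0 + j)%N; rewrite ?leq_addr // -addnS yj ylt.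
Qed.

Lemma floor_double (y : R) :
  Num.floor (2 * y) = 2 * Num.floor y \/ Num.floor (2 * y) = 2 * Num.floor y + 1.
Proof.
have lb : 2 * Num.floor y <= Num.floor (2 * y).
  by rewrite floor_ge_int intrM ler_wpM2l // floor_le.
have ub : Num.floor (2 * y) < 2 * Num.floor y + 2.
  rewrite ltNge floor_ge_int -[2 * _ + 2](mulrDr 2 _ 1) intrM; apply/negP.
  by rewrite ler_pM2l // leNgt; case/andP: (floor_itv y) => _ ->.
lia.
Qed.

Lemma le0_of_le_div_succ (x C : R) : (forall N : nat, x <= C / N.+1%:R) -> x <= 0.
Proof.
move=> xC; rewrite leNgt; apply/negP => x0.
have := xC (Num.bound `|C / x|); rewrite ler_pdivlMr ?ltr0Sn // leNgt => /negP; apply.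
rewrite -ltr_pdivrMl // mulrC; apply: (lt_le_trans (le_lt_trans (ler_norm _) _)).
  exact: archi_boundP.
by rewrite ler_nat.
Qed.

End dyadic_scales.

Lemma limf_einf_at_right_gt0P (R : realType) (f : R -> R) :
  (0 < limf_einf (fun r => (f r)%:E) 0^'+)%E <->
  exists c e, [/\ 0 < c, 0 < e & forall r, 0 < r < e -> c <= f r].
Proof.
rewrite limf_einfE; split.
  move=> /ereal_sup_gt [_ [V /nbhs_ballP [e /= e0 eV] <-]] inf_gt0.
  have inf_le r : 0 < r < e -> (ereal_inf [set (f s)%:E | s in V] <= (f r)%:E)%E.
    move=> /andP [r0 re]; apply: ereal_inf_lbound; exists r => //.
    by apply: eV => //=; rewrite /ball /= sub0r normrN gtr0_norm.
  case: (ereal_inf _) inf_gt0 inf_le => [c| |] // c0 cf.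
  - by exists c, e; split => // [|r /cf]; rewrite ?lte_fin ?lee_fin.
  - by exists 1, e; split => // r /cf.
move=> [c [e [c0 e0 cf]]].
apply: (@lt_le_trans _ _ c%:E); first by rewrite lte_fin.
apply: (@le_trans _ _ (ereal_inf [set (f r)%:E | r in [set r | 0 < r < e]])).
  by apply: le_ereal_inf_tmp => _ [r re <-]; rewrite lee_fin; exact: cf.
apply: ereal_sup_ubound; exists [set r | 0 < r < e] => //.
near=> r; apply/andP; split; near: r; [exact: nbhs_right_gt | exact: nbhs_right_lt].
Unshelve. all: by end_near.
Qed.

Lemma lower_density_dyadicP (R : realType) (g : R -> R) (m : nat) :
  {homo g : r s / r <= s} ->
  (exists c e, [/\ 0 < c, 0 < e & forall r, 0 < r < e -> c <= g r / r ^+ m]) <->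
  exists N k0, forall k, (k0 <= k)%N -> (2 ^- k) ^+ m / N.+1%:R <= g (2 ^- k).
Proof.
move=> g_homo; split.
  move=> [c [e [c0 e0 cg]]]; exists (Num.bound c^-1), (Num.bound e^-1) => k kk0.
  have := cg (2 ^- k).
  rewrite dyadic_gt0 (le_lt_trans (dyadic_le _ kk0) (dyadic_bound_lt e0)).
  rewrite ler_pdivlMr ?exprn_gt0 ?dyadic_gt0 // => /(_ isT); apply: le_trans.
  rewrite mulrC ler_wpM2r ?exprn_ge0 ?ltW ?dyadic_gt0 //.
  rewrite -[ltRHS]invrK ltf_pV2 ?posrE ?invr_gt0 ?ltr0Sn //.
  by apply: lt_le_trans (archi_boundP _) _; rewrite ?ler_nat ?invr_ge0 ?ltW.
move=> [N [k0 gk]]; exists (2 ^+ m * N.+1%:R)^-1, (2 ^- k0).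
split; rewrite ?invr_gt0 ?mulr_gt0 ?exprn_gt0 ?ltr0Sn ?dyadic_gt0 // => r /andP [r0 rk0].
have [k kk0 /andP [kr rk]] := dyadic_bracket r0 rk0.
rewrite ler_pdivlMr ?exprn_gt0 //; apply: le_trans (g_homo _ _ kr).
apply: le_trans (gk _ (leqW kk0)).
rewrite dyadic_powS invfM mulrC -mulrA ler_wpM2r ?mulr_ge0 ?invr_ge0 ?exprn_ge0 //.
by rewrite lerXn2r ?nnegrE ?ltW ?dyadic_gt0.
Qed.

Section measurable_real_sets.
Context d (U : measurableType d) (R : realType).
Implicit Types f g : U -> R.

Lemma measurable_lt_set f g : measurable_fun setT f -> measurable_fun setT g ->
  measurable [set u | f u < g u].
Proof.
move=> mf mg; have := measurable_fun_ltr mf mg measurableT (Y := [set true]).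
by rewrite setTI; apply.
Qed.

Lemma measurable_le_set f g : measurable_fun setT f -> measurable_fun setT g ->
  measurable [set u | f u <= g u].
Proof.
move=> mf mg; have := measurable_fun_ler mf mg measurableT (Y := [set true]).
by rewrite setTI; apply.
Qed.

Lemma measurable_forall_itv (I : finType) (f : I -> U -> R) (a b : I -> R) :
  (forall i, measurable_fun setT (f i)) ->
  measurable [set u | forall i, a i <= f i u < b i].
Proof.
move=> mf.
have -> : [set u | forall i, a i <= f i u < b i] =
    \bigcap_(i in setT) ([set u | a i <= f i u] `&` [set u | f i u < b i]).
  by apply/seteqP; split => u /= fu i => [_|]; [exact/andP | exact/andP/fu].
apply: fin_bigcap_measurable => // i _; apply: measurableI.
  exact: measurable_le_set (measurable_cst _) (mf i).
exact: measurable_lt_set (mf i) (measurable_cst _).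
Qed.

Lemma measurable_fun_euclid_dist n (f g : U -> 'rV[R]_n) :
  (forall i, measurable_fun setT (fun u => f u ord0 i)) ->
  (forall i, measurable_fun setT (fun u => g u ord0 i)) ->
  measurable_fun setT (fun u => euclid_norm (f u - g u)).
Proof.
move=> mf mg; apply: measurableT_comp.
  exact: continuous_measurable_fun (@sqrt_continuous R).
apply: measurable_sum => i; apply: measurable_funX.
by under eq_fun do rewrite !mxE; exact: measurable_funB.
Qed.

End measurable_real_sets.

Lemma measure_le_cover d (T : measurableType d) (R : realType)
    (mu : {measure set T -> \bar R}) (I : eqType) (s : seq I) (F : I -> set T)
    (A : set T) (c : R) :
  measurable A -> (forall i, measurable (F i)) ->
  (forall t, A t -> exists2 i, i \in s & F i t) ->
  (forall i, (mu (A `&` F i) <= c%:E)%E) -> (mu A <= (c *+ size s)%:E)%E.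
Proof.
elim: s A => [|i s IH] A mA mF Acov Ac.
  have -> : A = set0 by apply/seteqP; split => t // /Acov [].
  by rewrite measure0.
have mAi : measurable (A `&` F i) by exact: measurableI.
have mAr : measurable (A `&` ~` F i) by exact/measurableI/measurableC.
apply: (@le_trans _ _ (mu (A `&` F i) + mu (A `&` ~` F i))%E).
  apply: le_trans (measureU2 _ mAi mAr); rewrite le_measure ?inE //.
    exact: measurableU.
  by move=> t At; have [Fit|nFit] := pselect (F i t); [left | right].
rewrite /= mulrS EFinD leeD // IH //.
- move=> t [At nFit]; have [j] := Acov t At.
  by rewrite in_cons => /predU1P [->|js] Fjt //; exists j.
- move=> j; apply: le_trans (Ac j); apply: le_measure; rewrite ?inE.
  + exact/measurableI/mF.
  + exact/measurableI/mF.
  + by move=> t [[]].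
Qed.

Section dyadic_cubes.
Variables (R : realType) (n : nat).
Implicit Types (x y : 'rV[R]_n) (z : 'I_n -> int).

Lemma euclid_norm_lt (v : 'rV[R]_n) (r : R) :
  0 < r -> \sum_(i < n) v ord0 i ^+ 2 < r ^+ 2 -> euclid_norm v < r.
Proof.
move=> r0 vr; rewrite /euclid_norm -(ger0_norm (ltW r0)) -sqrtr_sqr.
by rewrite ltr_sqrt ?exprn_gt0.
Qed.

Definition dcube (j : nat) z : set 'rV[R]_n :=
  [set x | forall i, Num.floor (2 ^+ j * x ord0 i) = z i].

Definition dcube_index (j : nat) x : 'I_n -> int :=
  fun i => Num.floor (2 ^+ j * x ord0 i).

Lemma dcube_index_mem j x : dcube j (dcube_index j x) x.
Proof. by []. Qed.

Lemma dcube_indexE j z x : dcube j z x -> dcube_index j x = z.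
Proof. by move=> xz; apply/funext => i; exact: xz. Qed.

Definition dcube_child z (b : {ffun 'I_n -> bool}) : 'I_n -> int :=
  fun i => 2 * z i + (b i : nat)%:Z.

Lemma dcube_children j z x : dcube j z x ->
  exists b, dcube j.+1 (dcube_child z b) x.
Proof.
move=> xz; exists [ffun i => Num.floor (2 ^+ j.+1 * x ord0 i) != 2 * z i] => i.
rewrite /dcube_child ffunE exprS -mulrA -(xz i).
case: (floor_double (2 ^+ j * x ord0 i)) => ->; first by rewrite eqxx addr0.
by case: eqP => //; lia.
Qed.

Lemma dcube_coord_dist j z x y i : dcube j z x -> dcube j z y ->
  `|x ord0 i - y ord0 i| < 2 ^- j.
Proof.
move=> /(_ i) xz /(_ i) yz.
have := floor_itv (2 ^+ j * x ord0 i); have := floor_itv (2 ^+ j * y ord0 i).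
rewrite xz yz intrD => /andP [y1 y2] /andP [x1 x2].
have : `|2 ^+ j * (x ord0 i - y ord0 i)| < 1.
  by rewrite mulrBr ltr_norml; apply/andP; split; lra.
by rewrite normrM gtr0_norm ?exprn_gt0 // -ltr_pdivlMl ?exprn_gt0 // mulr1.
Qed.

Lemma dcube_sub_ball k x y : dcube (k + n) (dcube_index (k + n) x) y ->
  euclid_norm (y - x) < 2 ^- k.
Proof.
move=> yx; apply: euclid_norm_lt; first exact: dyadic_gt0.
apply: (@le_lt_trans _ _ (n%:R * (2 ^- (k + n)) ^+ 2)).
  rewrite mulr_natl -[n in _ *+ n]card_ord -sumr_const; apply: ler_sum => i _.
  rewrite !mxE -real_normK ?num_real // lerXn2r ?nnegrE ?(ltW (dyadic_gt0 _)) //.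
  exact/ltW/(dcube_coord_dist i yx (dcube_index_mem _ _)).
have n_lt : (n < (2 ^ n) ^ 2)%N.
  rewrite -expnM; apply: leq_trans (ltn_expl n (ltnSn 1)) _.
  by rewrite leq_pexp2l // muln2 -addnn leq_addr.
rewrite exprD invfM exprMn mulrCA gtr_pMr ?exprn_gt0 ?dyadic_gt0 //.
rewrite exprVn ltr_pdivrMr ?exprn_gt0 // mul1r.
by rewrite -!natrX ltr_nat.
Qed.

Definition dbox (M : nat) : set 'rV[R]_n :=
  [set x | forall i, - M%:R <= x ord0 i < M%:R].

Lemma dbox_exists x : exists M, dbox M x.
Proof.
exists (Num.bound (\sum_(i < n) `|x ord0 i|)) => i.
have : `|x ord0 i| < (Num.bound (\sum_(i < n) `|x ord0 i|))%:R.
  apply: le_lt_trans (archi_boundP _); last exact: sumr_ge0.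
  by rewrite (bigD1 i) //= lerDl sumr_ge0.
by rewrite ltr_norml => /andP [/ltW -> ->].
Qed.

Lemma dbox_dcube0 M x : dbox M x ->
  exists f : {ffun 'I_n -> 'I_(2 * M)}, dcube 0 (fun i => (f i)%:Z - M%:Z) x.
Proof.
move=> xM.
have floor_ge i : - M%:Z <= Num.floor (x ord0 i).
  by rewrite floor_ge_int mulrNz; case/andP: (xM i).
have floor_lt i : (absz (Num.floor (x ord0 i) + M%:Z)%R < 2 * M)%N.
  have : Num.floor (x ord0 i) < M%:Z by rewrite floor_lt_int; case/andP: (xM i).
  by have := floor_ge i; lia.
exists [ffun i => Ordinal (floor_lt i)] => i.
by rewrite ffunE /= expr0 mul1r; have := floor_ge i; lia.
Qed.

End dyadic_cubes.

Section mould_of_random_vector.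
Context d (T : measurableType d) (R : realType) (P : probability T R) (n : nat)
  (X : T -> 'rV[R]_n).
Hypothesis hX : random_vector X.

Definition ballX (x : 'rV[R]_n) (r : R) : set T :=
  [set t | euclid_norm (X t - x) < r].

Lemma measurable_ballX x r : measurable (ballX x r).
Proof.
apply: measurable_lt_set (measurable_cst r).
by apply: measurable_fun_euclid_dist => // i; exact: measurable_cst.
Qed.

Lemma measurable_fun_P_ballX r : measurable_fun setT (fun t => P (ballX (X t) r)).
Proof.
pose A := [set p : T * T | euclid_norm (X p.2 - X p.1) < r].
have mA : measurable A.
  apply: measurable_lt_set (measurable_cst r).
  by apply: measurable_fun_euclid_dist => i; apply: measurableT_comp (hX i) _.
apply: eq_measurable_fun (measurable_fun_xsection P mA) => t _ /=; congr (P _).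
by apply/seteqP; split => s; rewrite /xsection /= inE.
Qed.

Lemma measurable_dcube j z : measurable (X @^-1` dcube j z).
Proof.
have -> : X @^-1` dcube j z =
    [set t | forall i, (z i)%:~R <= 2 ^+ j * X t ord0 i < (z i + 1)%:~R].
  apply/seteqP; split => t /= tz i; first by rewrite -floor_eq tz.
  by apply/eqP; rewrite floor_eq.
apply: measurable_forall_itv => i.
exact: measurable_funM (measurable_cst _) (hX i).
Qed.

Lemma measurable_dbox M : measurable (X @^-1` dbox M).
Proof. exact: measurable_forall_itv. Qed.

Definition pball x r : R := fine (P (ballX x r)).

Lemma pballE x r : P (ballX x r) = (pball x r)%:E.
Proof. by rewrite fineK // fin_num_measure //; exact: measurable_ballX. Qed.

Lemma pball_homo x : {homo pball x : r s / r <= s}.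
Proof.
move=> r s rs; rewrite -lee_fin -!pballE le_measure ?inE //.
- exact: measurable_ballX.
- exact: measurable_ballX.
by move=> t /= /lt_le_trans; apply.
Qed.

Lemma measurable_fun_pball r : measurable_fun setT (fun t => pball (X t) r).
Proof.
exact: measurableT_comp (fine_measurable measurableT) (measurable_fun_P_ballX r).
Qed.

Definition dyadic_mould : set 'rV[R]_n := [set x | exists N k0, forall k,
  (k0 <= k)%N -> (2 ^- k) ^+ n / N.+1%:R <= pball x (2 ^- k)].

Lemma mould_dyadicE : mould P X n = dyadic_mould.
Proof.
apply/funext => x; apply/propext; rewrite /mould /=.
have -> : (fun eps : R =>
    (P [set t | (euclid_norm (X t - x) < eps)%R] * ((eps ^+ n)^-1)%:E)%E) =
    (fun eps => (pball x eps / eps ^+ n)%:E).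
  by apply/funext => eps; rewrite -[[set t | _]]/(ballX x eps) pballE.
exact: iff_trans (limf_einf_at_right_gt0P _) (lower_density_dyadicP _ (pball_homo x)).
Qed.

Lemma measurable_dyadic_mould : measurable (X @^-1` dyadic_mould).
Proof.
have -> : X @^-1` dyadic_mould =
    \bigcup_N \bigcup_k0 \bigcap_(k in [set k | (k0 <= k)%N])
      [set t | (2 ^- k) ^+ n / N.+1%:R <= pball (X t) (2 ^- k)].
  apply/seteqP; split => t /=; first by move=> [N [k0 tk]]; exists N => //; exists k0.
  by move=> [N _ [k0 _ tk]]; exists N, k0.
apply: bigcupT_measurable => N; apply: bigcupT_measurable => k0.
apply: bigcap_measurable; first by exists k0 => /=.
move=> k _; exact: measurable_le_set (measurable_cst _) (measurable_fun_pball _).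
Qed.

Lemma measurable_not_dyadic_mould_dbox M :
  measurable (X @^-1` (~` dyadic_mould `&` dbox M)).
Proof.
rewrite preimage_setI preimage_setC.
exact: measurableI (measurableC measurable_dyadic_mould) (measurable_dbox M).
Qed.

Definition light_at (δ : R) (k : nat) (t : T) : Prop :=
  (P (X @^-1` dcube k (dcube_index k (X t))) < (δ * (2 ^- k) ^+ n)%:E)%E.

Lemma measure_light_in_dcube δ m j z A : 0 <= δ ->
  measurable A -> A `<=` X @^-1` dcube j z ->
  (forall t, A t -> exists2 k, (j <= k < j + m)%N & light_at δ k t) ->
  (P A <= (δ * (2 ^- j) ^+ n)%:E)%E.
Proof.
move=> δ0; elim: m j z A => [|m IH] j z A mA Az Alight.
  have -> : A = set0 by apply/seteqP; split => t // /Alight [k]; rewrite addn0; lia.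
  by rewrite measure0 lee_fin mulr_ge0 // exprn_ge0 // ltW // dyadic_gt0.
have [light|heavy] := ltP (P (X @^-1` dcube j z)) (δ * (2 ^- j) ^+ n)%:E.
  apply: le_trans (ltW light); apply: le_measure; rewrite ?inE //.
  exact: measurable_dcube.
have -> : δ * (2 ^- j) ^+ n = δ * (2 ^- j.+1) ^+ n *+ size (enum {ffun 'I_n -> bool}).
  rewrite -cardE card_ffun card_bool card_ord dyadic_powS -mulrnAr.
  rewrite -[_ *+ 2 ^ n]mulr_natr natrX.
  by rewrite divfK // expf_neq0 // pnatr_eq0.
apply: (measure_le_cover mA (fun b => measurable_dcube j.+1 (dcube_child z b))).
  by move=> t /Az /dcube_children [b tb]; exists b; rewrite ?mem_enum.
move=> b; apply: (IH j.+1 (dcube_child z b)).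
- exact: measurableI (measurable_dcube _ _).
- by move=> t [].
- move=> t [At _]; have [k /andP [jk km] tk] := Alight t At.
  have k_neq_j : k != j.
    apply: contraTneq heavy => kj; rewrite -ltNge.
    by move: tk; rewrite /light_at kj (dcube_indexE (Az t At)).
  by exists k => //; rewrite addSnnS km andbT ltn_neqAle eq_sym k_neq_j jk.
Qed.

Lemma measure_light_in_dbox δ m M A : 0 <= δ ->
  measurable A -> A `<=` X @^-1` dbox M ->
  (forall t, A t -> exists2 k, (k < m)%N & light_at δ k t) ->
  (P A <= (δ * ((2 * M) ^ n)%N%:R)%:E)%E.
Proof.
move=> δ0 mA AM Alight.
pose z (f : {ffun 'I_n -> 'I_(2 * M)}) i := (f i)%:Z - M%:Z.
have -> : δ * ((2 * M) ^ n)%N%:R =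
    δ * (2 ^- 0) ^+ n *+ size (enum {ffun 'I_n -> 'I_(2 * M)}).
  by rewrite -cardE card_ffun !card_ord expr0 invr1 expr1n mulr1 mulr_natr.
apply: (measure_le_cover mA (fun f => measurable_dcube 0 (z f))).
  by move=> t /AM /dbox_dcube0 [f tf]; exists f; rewrite ?mem_enum.
move=> f; apply: (measure_light_in_dcube (m := m) (z := z f)) => //.
  exact: measurableI (measurable_dcube _ _).
by move=> t [/Alight [k km tk] _]; exists k; rewrite ?add0n.
Qed.

Definition sparse_at (N k : nat) (t : T) : Prop :=
  pball (X t) (2 ^- k) < (2 ^- k) ^+ n / N.+1%:R.

Lemma light_of_sparse N k t : sparse_at N k t ->
  light_at ((2 ^+ n) ^+ n / N.+1%:R) (k + n) t.
Proof.
move=> sparse; apply: (@le_lt_trans _ _ (P (ballX (X t) (2 ^- k)))).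
  apply: le_measure; rewrite ?inE; [exact: measurable_dcube | exact: measurable_ballX |].
  by move=> s; exact: dcube_sub_ball.
rewrite pballE lte_fin; apply: (lt_le_trans sparse).
rewrite mulrAC exprD invfM exprMn mulrCA -exprMn.
by rewrite mulfV ?expf_neq0 ?pnatr_eq0 // expr1n mulr1.
Qed.

Lemma measure_not_dyadic_mould_dbox N M :
  (P (X @^-1` (~` dyadic_mould `&` dbox M)) <=
   ((2 ^+ n) ^+ n / N.+1%:R * ((2 * M) ^ n)%N%:R)%:E)%E.
Proof.
set δ := (2 ^+ n) ^+ n / N.+1%:R.
have δ0 : 0 <= δ by rewrite divr_ge0 ?exprn_ge0.
pose E m := X @^-1` dbox M `&` \bigcup_(k in [set k | (k < m)%N]) sparse_at N k.
have mE m : measurable (E m).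
  apply: measurableI; first exact: measurable_dbox.
  apply: bigcup_measurable => k _.
  exact: measurable_lt_set (measurable_fun_pball _) (measurable_cst _).
have E_nd : nondecreasing_seq E.
  move=> a b ab; apply/subsetPset => t [tM [k /= ka tk]]; split => //.
  by exists k => //=; exact: leq_trans ab.
have E_le m : (P (E m) <= (δ * ((2 * M) ^ n)%N%:R)%:E)%E.
  apply: (measure_light_in_dbox (m := (m + n)%N) δ0 (mE m)); first by move=> t [].
  move=> t [_ [k /= km tk]]; exists (k + n)%N; first by rewrite ltn_add2r.
  exact: light_of_sparse.
have sub_E : X @^-1` (~` dyadic_mould `&` dbox M) `<=` \bigcup_m E m.
  move=> t [tnd tM]; apply: contrapT => tnE; apply: tnd.
  exists N, 0%N => k _; rewrite leNgt; apply/negP => tk.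
  by apply: tnE; exists k.+1 => //; split => //; exists k => /=.
have E_cvg := @nondecreasing_cvg_mu _ _ _ P E mE (bigcupT_measurable _ mE) E_nd.
apply: (@le_trans _ _ (P (\bigcup_m E m))).
  apply: le_measure sub_E; rewrite inE; first exact: measurable_not_dyadic_mould_dbox.
  exact: bigcupT_measurable.
rewrite -(cvg_lim _ E_cvg) //; apply: lime_le; first exact: cvgP E_cvg.
exact: nearW.
Qed.

Lemma P_not_dyadic_mould : P (X @^-1` (~` dyadic_mould)) = 0%E.
Proof.
have dbox_null M : P (X @^-1` (~` dyadic_mould `&` dbox M)) = 0%E.
  have fin := fin_num_measure P _ (measurable_not_dyadic_mould_dbox M).
  apply/eqP; rewrite eq_le measure_ge0 andbT -(fineK fin) lee_fin.
  apply: (le0_of_le_div_succ (C := (2 ^+ n) ^+ n * ((2 * M) ^ n)%N%:R)) => N.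
  by rewrite -lee_fin fineK // mulrAC; exact: measure_not_dyadic_mould_dbox.
have cover :
    X @^-1` (~` dyadic_mould) `<=` \bigcup_M X @^-1` (~` dyadic_mould `&` dbox M).
  by move=> t tnd; have [M tM] := dbox_exists (X t); exists M.
apply/negligibleP.
  by rewrite preimage_setC; exact/measurableC/measurable_dyadic_mould.
apply: negligibleS cover _; apply: negligible_bigcup => M.
by apply/negligibleP; [exact: measurable_not_dyadic_mould_dbox | exact: dbox_null].
Qed.

Lemma probability_dyadic_mould : P (X @^-1` dyadic_mould) = 1%E.
Proof.
have mXD := measurable_dyadic_mould.
have := P_not_dyadic_mould; rewrite preimage_setC probability_setC //.
rewrite -(fineK (fin_num_measure _ _ mXD)) -EFinB => /eqP.
by rewrite eqe subr_eq0 => /eqP <-.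
Qed.

End mould_of_random_vector.

Theorem mainTheorem5 (d : measure_display) (T : measurableType d)
  (R : realType) (P : probability T R) (n : nat) (X : T -> 'rV[R]_n)
  (hX : random_vector X) :
  measurable [set t | mould P X n (X t)] /\
  P [set t | mould P X n (X t)] = 1%E.
Proof.
have -> : [set t | mould P X n (X t)] = X @^-1` dyadic_mould P X.
  by rewrite mould_dyadicE.
split; [exact: measurable_dyadic_mould | exact: probability_dyadic_mould].
Qed.
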